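(* Under the Fuzzy RD Assumption below, $$\int\Delta(z)\,f_{Z(0)\mid X,co}(z\mid c^-)\,dz=\frac{\int\big(\mathbb E(Y\mid X=c^+,Z=z)-\mathbb E(Y\mid X=c^-,Z=z)\big)f_{Z(0)\mid X}(z\mid c^-)\,dz}{\int\big(\mathbb E(T\mid X=c^+,Z=z)-\mathbb E(T\mid X=c^-,Z=z)\big)f_{Z(0)\mid X}(z\mid c^-)\,dz},$$ and, with $g(z)=f_{Z(0)\mid X}(z\mid c^-)+f_{Z(1)\mid X}(z\mid c^+)$, $$\frac{\int\Delta(z)\,p_{co}(z)\,g(z)\,dz}{\int p_{co}(z)\,g(z)\,dz}=\frac{\int\big(\mathbb E(Y\mid X=c^+,Z=z)-\mathbb E(Y\mid X=c^-,Z=z)\big)g(z)\,dz}{\int\big(\mathbb E(T\mid X=c^+,Z=z)-\mathbb E(T\mid X=c^-,Z=z)\big)g(z)\,dz},$$ i.e. the left side is the average of $\Delta$ over compliers at the cutoff whose covariates follow the equal mixture of the left- and right-limit covariate distributions. (Denominators are assumed nonzero.)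
   Context: Fuzzy RD setting: running variable $X$, cutoff $c$, binary treatment $T$, potential outcomes $Y(0),Y(1)$ with $Y=TY(1)+(1-T)Y(0)$, potential covariates with $Z=\mathbf 1(X>c)Z(1)+\mathbf 1(X\le c)Z(0)$. Each individual has a type $\tau\in\{co,at,nt\}$: compliers ($T=\mathbf 1(X>c)$), always-takers ($T=1$), never-takers ($T=0$). Limits $c^\pm$ denote right/left limits in $x$ of the corresponding conditional quantities (assumed to exist). Fuzzy RD Assumption: (1) Independence: for each type $\tau$ and each $z$, $\mathbb P(\tau\mid X=c^+,Z(1)=z)=\mathbb P(\tau\mid X=c^-,Z(0)=z)=:p_\tau(z)$. (2) Monotonicity: $p_{co}(z)+p_{at}(z)+p_{nt}(z)=1$ (no other types). (3) Exclusion: $\mathbb E(Y(1)\mid X=c^+,Z(1)=z,at)=\mathbb E(Y(1)\mid X=c^-,Z(0)=z,at)$ and $\mathbb E(Y(0)\mid X=c^+,Z(1)=z,nt)=\mathbb E(Y(0)\mid X=c^-,Z(0)=z,nt)$. Definitions: $\Delta(z)=\mathbb E(Y(1)\mid X=c^+,Z(1)=z,co)-\mathbb E(Y(0)\mid X=c^-,Z(0)=z,co)$; $f_{Z(0)\mid X}(z\mid c^-)$, $f_{Z(1)\mid X}(z\mid c^+)$ are the limiting conditional densities of $Z(0)$, $Z(1)$ given $X$, and $f_{Z(0)\mid X,co}(z\mid c^-)$ is the limiting conditional density of $Z(0)$ given $X\uparrow c$ and type $co$. *)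

From HB Require Import structures.
From mathcomp Require Import all_boot all_order all_algebra.
From mathcomp Require Import all_classical all_reals all_analysis.
Set Implicit Arguments. Unset Strict Implicit. Unset Printing Implicit Defensive.
Import Order.TTheory GRing.Theory Num.Theory.
Local Open Scope ring_scope.

(* Individual types: compliers, always-takers, never-takers, and (to state
   monotonicity honestly) defiers, for whom T = 1(X <= c). *)
Inductive rtype := Co | At | Nt | De.

(* Treatment status of a type on each side of the cutoff
   ([above = true] means X > c). *)
Definition treat (tau : rtype) (above : bool) : bool :=
  match tau with Co => above | At => true | Nt => false | De => ~~ above end.

(* The limiting (x -> c^+ / x -> c^-) conditional quantities of the model,
   as functions of the covariate value z. *)
Record RDLimits (R : realType) (Z : Type) := {
  pR : rtype -> Z -> R;          (* P(tau | X = c^+, Z(1) = z) *)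
  pL : rtype -> Z -> R;          (* P(tau | X = c^-, Z(0) = z) *)
  mR : rtype -> bool -> Z -> R;  (* mR tau t z = E(Y(t) | X = c^+, Z(1) = z, tau) *)
  mL : rtype -> bool -> Z -> R;  (* mL tau t z = E(Y(t) | X = c^-, Z(0) = z, tau) *)
  fR : Z -> R;                   (* f_{Z(1)|X}(z | c^+) *)
  fL : Z -> R                    (* f_{Z(0)|X}(z | c^-) *)
}.

Section Defs.
Variables (R : realType) (d : measure_display) (Z : measurableType d)
          (mu : {measure set Z -> \bar R}) (L : RDLimits R Z).

Definition wf_limits : Prop :=
  (forall tau z, 0 <= pR L tau z) /\ (forall tau z, 0 <= pL L tau z) /\
  (forall z, pR L Co z + pR L At z + pR L Nt z + pR L De z = 1) /\
  (forall z, pL L Co z + pL L At z + pL L Nt z + pL L De z = 1) /\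
  (forall z, 0 <= fR L z) /\ (forall z, 0 <= fL L z) /\
  mu.-integrable setT (fun z => (fR L z)%:E) /\
  mu.-integrable setT (fun z => (fL L z)%:E) /\
  Rintegral mu setT (fR L) = 1 /\ Rintegral mu setT (fL L) = 1.

(* Fuzzy RD Assumption (1) independence, (2) monotonicity, (3) exclusion. *)
Definition fuzzyRD : Prop :=
  (forall tau z, pR L tau z = pL L tau z) /\
  (forall z, pL L Co z + pL L At z + pL L Nt z = 1) /\
  (forall z, mR L At true z = mL L At true z) /\
  (forall z, mR L Nt false z = mL L Nt false z).

(* E(Y | X = c^+, Z = z) and E(Y | X = c^-, Z = z) (law of total expectation
   over types, with Y = Y(T), and Z = Z(1) above, Z = Z(0) below the cutoff). *)
Definition EY_R (z : Z) : R :=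
  pR L Co z * mR L Co (treat Co true) z + pR L At z * mR L At (treat At true) z
  + pR L Nt z * mR L Nt (treat Nt true) z + pR L De z * mR L De (treat De true) z.
Definition EY_L (z : Z) : R :=
  pL L Co z * mL L Co (treat Co false) z + pL L At z * mL L At (treat At false) z
  + pL L Nt z * mL L Nt (treat Nt false) z + pL L De z * mL L De (treat De false) z.

Definition ET_R (z : Z) : R :=
  pR L Co z * (treat Co true)%:R + pR L At z * (treat At true)%:R
  + pR L Nt z * (treat Nt true)%:R + pR L De z * (treat De true)%:R.
Definition ET_L (z : Z) : R :=
  pL L Co z * (treat Co false)%:R + pL L At z * (treat At false)%:R
  + pL L Nt z * (treat Nt false)%:R + pL L De z * (treat De false)%:R.

Definition Delta (z : Z) : R := mR L Co true z - mL L Co false z.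

(* p_co(z) (under independence, = pR Co = pL Co). *)
Definition p_co (z : Z) : R := pL L Co z.

(* f_{Z(0)|X,co}(z | c^-) by Bayes: P(co|c^-,Z(0)=z) f_{Z(0)|X}(z|c^-) / P(co|c^-),
   where P(co | X = c^-) = \int P(co|c^-,Z(0)=z) f_{Z(0)|X}(z|c^-) dz. *)
Definition P_co_L : R := Rintegral mu setT (fun z => pL L Co z * fL L z).
Definition f_co_L (z : Z) : R := pL L Co z * fL L z / P_co_L.

Definition gmix (z : Z) : R := fL L z + fR L z.

Definition regular : Prop :=
  forall tau t, mu.-integrable setT (fun z => (pR L tau z * mR L tau t z * fL L z)%:E) /\
    mu.-integrable setT (fun z => (pR L tau z * mR L tau t z * fR L z)%:E) /\
    mu.-integrable setT (fun z => (pL L tau z * mL L tau t z * fL L z)%:E) /\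
    mu.-integrable setT (fun z => (pL L tau z * mL L tau t z * fR L z)%:E) /\
    mu.-integrable setT (fun z => (pR L tau z * fL L z)%:E) /\
    mu.-integrable setT (fun z => (pR L tau z * fR L z)%:E) /\
    mu.-integrable setT (fun z => (pL L tau z * fL L z)%:E) /\
    mu.-integrable setT (fun z => (pL L tau z * fR L z)%:E).

End Defs.

(* Monotonicity together with the type probabilities summing to one rules out
   defiers.  Then, by independence and exclusion, always-takers and never-takers
   contribute identically on both sides of the cutoff, so pointwise in z the
   jump of E(T | X, Z = z) is p_co(z) and the jump of E(Y | X, Z = z) is
   Delta(z) p_co(z).  Integrating against any weight h turns both Wald ratios
   into the p_co h-weighted average of Delta; for h = f_{Z(0)|X}(. | c^-) this
   is the Bayes formula defining the complier density. *)

From HB Require Import structures.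
From mathcomp Require Import all_boot all_order all_algebra.
From mathcomp Require Import all_classical all_reals all_analysis.
From mathcomp Require Import lra ring.
Import Order.TTheory GRing.Theory Num.Theory.
Local Open Scope ring_scope.

Lemma fuzzyRD_no_defiers {R : realType} {d : measure_display}
    {Z : measurableType d} {mu : {measure set Z -> \bar R}} {L : RDLimits R Z} :
  wf_limits mu L -> fuzzyRD L -> forall z, pL L De z = 0.
Proof.
move=> [_ [_ [_ [sumL _]]]] [_ [mono _]] z.
by have := sumL z; have := mono z; lra.
Qed.

Section Jumps.
Variables (R : realType) (d : measure_display) (Z : measurableType d)
          (L : RDLimits R Z).
Hypothesis indep : forall tau z, pR L tau z = pL L tau z.
Hypothesis no_defiers : forall z, pL L De z = 0.

Lemma ET_jump z : ET_R L z - ET_L L z = p_co L z.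
Proof. by rewrite /ET_R /ET_L /p_co /= !indep no_defiers; ring. Qed.

Lemma EY_jump z :
  mR L At true z = mL L At true z -> mR L Nt false z = mL L Nt false z ->
  EY_R L z - EY_L L z = Delta L z * p_co L z.
Proof.
move=> exclA exclN.
by rewrite /EY_R /EY_L /Delta /p_co /= !indep no_defiers exclA exclN; ring.
Qed.

End Jumps.

Section ComplierAverage.
Variables (R : realType) (d : measure_display) (Z : measurableType d)
          (mu : {measure set Z -> \bar R}) (L : RDLimits R Z).

Lemma integrable_Delta_pco_fL :
  regular mu L -> (forall tau z, pR L tau z = pL L tau z) ->
  mu.-integrable setT (fun z => (Delta L z * p_co L z * fL L z)%:E).
Proof.
move=> reg indep.
have [intR _] := reg Co true; have [_ [_ [intL _]]] := reg Co false.
apply: eq_integrable measurableT _ _ _ (integrableB measurableT intR intL) => z _ /=.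
by rewrite /Delta /p_co indep -EFinB; congr EFin; ring.
Qed.

Lemma Rintegral_Delta_f_co_L :
  mu.-integrable setT (fun z => (Delta L z * p_co L z * fL L z)%:E) ->
  Rintegral mu setT (fun z => Delta L z * f_co_L mu L z)
    = Rintegral mu setT (fun z => Delta L z * p_co L z * fL L z) / P_co_L mu L.
Proof.
move=> intD; rewrite -RintegralZr //.
by apply: eq_Rintegral => z _; rewrite /f_co_L /p_co !mulrA.
Qed.

End ComplierAverage.

Theorem theorem4 (R : realType) (d : measure_display) (Z : measurableType d)
  (mu : {measure set Z -> \bar R}) (L : RDLimits R Z) :
  wf_limits mu L -> regular mu L -> fuzzyRD L ->
  Rintegral mu setT (fun z => (ET_R L z - ET_L L z) * fL L z) != 0 ->
  Rintegral mu setT (fun z => (ET_R L z - ET_L L z) * gmix L z) != 0 ->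
  Rintegral mu setT (fun z => Delta L z * f_co_L mu L z)
    = Rintegral mu setT (fun z => (EY_R L z - EY_L L z) * fL L z)
      / Rintegral mu setT (fun z => (ET_R L z - ET_L L z) * fL L z)
  /\
  Rintegral mu setT (fun z => Delta L z * p_co L z * gmix L z)
    / Rintegral mu setT (fun z => p_co L z * gmix L z)
    = Rintegral mu setT (fun z => (EY_R L z - EY_L L z) * gmix L z)
      / Rintegral mu setT (fun z => (ET_R L z - ET_L L z) * gmix L z).
Proof.
move=> wf reg frd _ _.
have no_De := fuzzyRD_no_defiers wf frd.
have [indep [_ [exclA exclN]]] := frd.
have EY h : (fun z => (EY_R L z - EY_L L z) * h z)
            = (fun z => Delta L z * p_co L z * h z).
  by apply/funext => z; rewrite EY_jump.
have ET h : (fun z => (ET_R L z - ET_L L z) * h z) = (fun z => p_co L z * h z).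
  by apply/funext => z; rewrite ET_jump.
rewrite !EY !ET; split=> //.
by rewrite Rintegral_Delta_f_co_L //; exact: integrable_Delta_pco_fL.
Qed.
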